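(* Let $G$ be a non-empty bipartite graph with parts $X$ and $Y$. Let $X_0=\{x\in X: d(x)=|Y|\}$, $X_1=X\setminus X_0$, $Y_0=\{y\in Y: d(y)=|X|\}$ and $Y_1=Y\setminus Y_0$. Suppose that (i) $|X|>|Y|$, and (ii) either $X_1=Y_1=\emptyset$, or $|X_0|/|Y_1|>2|X_1|/|Y_0|$. Then $G$ contains a collection of at most $\left\lceil \frac{|X|}{|Y|+1}\right\rceil$ paths which together cover all vertices of $G$.
   Context: $d(v)$ denotes the degree of $v$ in $G$. Paths may have length zero (a single vertex) and need not be vertex-disjoint. *)

From mathcomp Require Import all_boot all_order all_algebra.
Set Implicit Arguments. Unset Strict Implicit. Unset Printing Implicit Defensive.

Definition simple_graph (T : finType) (e : rel T) : Prop :=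
  symmetric e /\ irreflexive e.

Definition bipartition (T : finType) (e : rel T) (X Y : {set T}) : Prop :=
  [disjoint X & Y] /\ X :|: Y = [set: T] /\
  (forall u v, e u v -> (u \in X) && (v \in Y) || (u \in Y) && (v \in X)).

Definition deg (T : finType) (e : rel T) (v : T) : nat := #|[set u | e v u]|.

Definition is_path (T : finType) (e : rel T) (p : seq T) : Prop :=
  match p with
  | [::] => False
  | x :: q => path e x q && uniq p
  end.

Definition path_cover (T : finType) (e : rel T) (P : seq (seq T)) : Prop :=
  (forall p, p \in P -> is_path e p) /\ (forall v : T, exists2 p, p \in P & v \in p).

Definition ceil_div (a b : nat) : nat := (a + b.-1) %/ b.

From mathcomp Require Import all_boot all_order all_algebra.
From mathcomp Require Import zify.
Import Order.TTheory GRing.Theory Num.Theory.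

Set Implicit Arguments.
Unset Strict Implicit.
Unset Printing Implicit Defensive.

(* Let k = ceil(|X| / (|Y|+1)).  Split X greedily into k groups of at most
   |Y|+1 vertices, each made of at most |Y0| vertices of X1 followed by
   vertices of X0.  List Y with Y0 first, and thread a group x_0, x_1, ...
   through it as x_0 y_1 x_1 y_2 x_2 ...: this is a path, since either
   y_i is in Y0 and hence adjacent to all of X, or i > |Y0|, so that x_(i-1)
   and x_i both lie in X0 and are adjacent to all of Y.  Hypothesis (ii)
   gives |X1| <= k |Y0|, so X1 fits into the groups, and leaves enough of X0
   to fill the first group up to |Y|+1 vertices, so that its path covers Y. *)

Section Weave.
Variable T : eqType.
Implicit Types (x y : T) (xs ys : seq T).

Fixpoint weave xs ys : seq T :=
  match xs, ys with
  | x :: xs', y :: ys' => y :: x :: weave xs' ys'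
  | _, _ => [::]
  end.

(* Stops as soon as either list runs out, so it may drop a tail of xs or ys. *)
Definition zigzag xs ys : seq T := if xs is x :: xs' then x :: weave xs' ys else [::].

Lemma perm_weave xs ys (n := minn (size xs) (size ys)) :
  perm_eq (weave xs ys) (take n xs ++ take n ys).
Proof.
rewrite {}/n; elim: xs ys => [|x xs IH] [|y ys] //=; rewrite minnSS /=.
rewrite perm_sym -cat_cons -[y :: take _ ys]cat1s perm_catCA /= !perm_cons perm_sym.
exact: IH.
Qed.

Lemma mem_zigzag_l xs ys : size xs <= (size ys).+1 -> {subset xs <= zigzag xs ys}.
Proof.
case: xs => [|x xs] //=; rewrite ltnS => le_xy v.
rewrite !inE (perm_mem (perm_weave xs ys)) mem_cat => /orP[-> // | v_xs].
by rewrite take_oversize ?v_xs ?orbT // leq_min leqnn.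
Qed.

Lemma mem_zigzag_r xs ys : (size ys).+1 <= size xs -> {subset ys <= zigzag xs ys}.
Proof.
case: xs => [|x xs] /=; first by rewrite ltn0.
rewrite ltnS => le_yx v v_ys.
rewrite inE (perm_mem (perm_weave xs ys)) mem_cat.
by rewrite [take _ ys]take_oversize ?leq_min ?le_yx ?v_ys ?orbT //=.
Qed.

Lemma zigzag_uniq xs ys : uniq (xs ++ ys) -> uniq (zigzag xs ys).
Proof.
case: xs => [|x xs] // U; rewrite [zigzag _ _]/=.
pose n := minn (size xs) (size ys).
have /perm_uniq -> : perm_eq (x :: weave xs ys) (x :: take n xs ++ take n ys).
  by rewrite perm_cons perm_weave.
apply: subseq_uniq U; rewrite -cat_cons.
by apply: cat_subseq; rewrite ?take_subseq //= eqxx take_subseq.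
Qed.

Lemma path_weave (e : rel T) x0 x xs ys :
  (forall i, i < size xs -> i < size ys ->
     e (nth x0 (x :: xs) i) (nth x0 ys i) && e (nth x0 ys i) (nth x0 xs i)) ->
  path e x (weave xs ys).
Proof.
elim: xs x ys => [|x' xs IH] x [|y ys] //= adj.
have /andP[-> ->] := adj 0 isT isT.
by apply: IH => i; apply: adj i.+1.
Qed.

End Weave.

Section Groups.
Variables (T : eqType) (c s : nat).
Hypothesis le_cs : c <= s.

Fixpoint groups k (L1 L0 : seq T) : seq (seq T) :=
  if k is k'.+1 then
    let g1 := take c L1 in let r := s - size g1 in
    (g1 ++ take r L0) :: groups k' (drop c L1) (drop r L0)
  else [::].

Lemma size_groups k L1 L0 : size (groups k L1 L0) = k.
Proof. by elim: k L1 L0 => [|k IH] L1 L0 //=; rewrite IH. Qed.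

Lemma groups_cover k L1 L0 :
  size L1 <= k * c -> size (L1 ++ L0) <= k * s ->
  {subset L1 ++ L0 <= flatten (groups k L1 L0)}.
Proof.
elim: k L1 L0 => [|k IH] L1 L0 /= le1 le10 v.
  by move: le10; rewrite leqn0 size_eq0 => /eqP ->.
set r := s - _; rewrite -{1}[L1](cat_take_drop c) -{1}[L0](cat_take_drop r) !mem_cat.
have le_kcs : k * c <= k * s by rewrite leq_mul2l le_cs orbT.
have IHv : v \in drop c L1 ++ drop r L0 -> v \in flatten (groups k (drop c L1) (drop r L0)).
  rewrite size_cat !mulSn in le1 le10.
  have r_def : r = s - minn c (size L1) by rewrite /r size_take_min.
  by apply: IH; rewrite ?size_cat !size_drop; lia.
rewrite mem_cat in IHv.
by case/orP=> /orP[] v_in; rewrite ?v_in ?orbT // IHv ?v_in ?orbT.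
Qed.

Lemma groups_shape k L1 L0 g : g \in groups k L1 L0 ->
  exists g1 g0,
    [/\ g = g1 ++ g0, subseq g1 L1, subseq g0 L0, size g1 <= c & size g <= s].
Proof.
elim: k L1 L0 => [|k IH] L1 L0 //=.
rewrite inE => /orP[/eqP -> | /IH[g1 [g0 [-> sub1 sub0 le_g1 le_g]]]].
  exists (take c L1), (take (s - size (take c L1)) L0).
  by split; rewrite ?take_subseq ?size_cat ?size_take_min //; lia.
exists g1, g0; split=> //.
  exact: subseq_trans _ _ _ sub1 (drop_subseq _ _).
exact: subseq_trans _ _ _ sub0 (drop_subseq _ _).
Qed.

Lemma groups_full k L1 L0 : 0 < k -> s - minn c (size L1) <= size L0 ->
  exists2 g, g \in groups k L1 L0 & size g = s.
Proof.
case: k => // k _ le_rL0; eexists; first exact: mem_head.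
by rewrite size_cat !size_take_min; lia.
Qed.

End Groups.

Lemma leq_ceil_div n s : 0 < s -> n <= ceil_div n s * s.
Proof.
move=> s_gt0; have := divn_eq (n + s.-1) s; have := ltn_pmod (n + s.-1) s_gt0.
rewrite /ceil_div; lia.
Qed.

Lemma ltr_nat_div (R : numFieldType) (a b c d : nat) : 0 < b -> 0 < d ->
  (a%:R / b%:R < c%:R / d%:R :> R)%R = (a * d < c * b).
Proof.
move=> b_gt0 d_gt0.
by rewrite ltr_pdivrMr ?ltr0n // mulrAC ltr_pdivlMr ?ltr0n // -!natrM ltr_nat.
Qed.

Lemma cover_bounds (a b c d k : nat) :
  c + d < a + b -> a + b <= k * (c + d).+1 ->
  (b = 0 /\ d = 0) \/ (0 < d /\ 2 * b * d < a * c) ->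
  b <= k * c /\ (c + d).+1 - minn c b <= a.
Proof.
move=> lt_m_n le_n_km [[b0 d0] | [d_gt0 lt_bd_ac]]; first by lia.
split.
  rewrite leqNgt; apply/negP => lt_kc_b.
  have := leq_mul (leqnn c) le_n_km; have := leq_mul lt_kc_b (leqnn (c + d).+1).
  nia.
case: (leqP c b) => [le_cb | ]; last by lia.
have : 2 * c * d <= 2 * b * d by rewrite leq_mul2r leq_mul2l le_cb !orbT.
nia.
Qed.

Lemma uniq_enum_catD (T : finType) (A B : {set T}) : uniq (enum (A :\: B) ++ enum B).
Proof.
rewrite cat_uniq !enum_uniq andbT /=; apply/hasPn => v.
by rewrite !mem_enum inE => ->.
Qed.

(* X0 = saturated e X Y and Y0 = saturated e Y X in the statement. *)
Definition saturated (T : finType) (e : rel T) (A B : {set T}) : {set T} :=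
  [set a in A | deg e a == #|B|].

Lemma saturated_sub (T : finType) (e : rel T) (A B : {set T}) :
  saturated e A B \subset A.
Proof. by apply/subsetP => a; rewrite inE => /andP[]. Qed.

Lemma card_saturatedD (T : finType) (e : rel T) (A B : {set T}) :
  #|A| = #|saturated e A B| + #|A :\: saturated e A B|.
Proof. by rewrite cardsDS ?saturated_sub // subnKC // subset_leq_card ?saturated_sub. Qed.

Lemma bipartition_sym (T : finType) (e : rel T) (X Y : {set T}) :
  bipartition e X Y -> bipartition e Y X.
Proof.
case=> dXY [UXY eXY]; split; first by rewrite disjoint_sym.
by split=> [|u v /eXY]; rewrite 1?setUC 1?orbC.
Qed.

Lemma saturated_adj (T : finType) (e : rel T) (X Y : {set T}) x y :
  bipartition e X Y -> x \in saturated e X Y -> y \in Y -> e x y.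
Proof.
case=> dXY [_ eXY]; rewrite inE => /andP[xX /eqP degx] yY.
suff NxY : [set u | e x u] = Y by rewrite -NxY inE in yY.
apply/eqP; rewrite eqEcard -degx leqnn andbT; apply/subsetP => u.
by rewrite inE => /eXY; rewrite xX (disjointFr dXY xX) /= orbF.
Qed.

Section Bipartite.
Variables (T : finType) (e : rel T) (X Y : {set T}).
Hypotheses (e_sym : symmetric e) (bipXY : bipartition e X Y).
Let X0 := saturated e X Y.
Let Y0 := saturated e Y X.
Let X1 := X :\: X0.
Let Y1 := Y :\: Y0.

Lemma adj_saturated u v : u \in X -> v \in Y -> (u \in X0) || (v \in Y0) -> e u v.
Proof.
move=> uX vY /orP[uX0 | vY0]; first exact: saturated_adj bipXY uX0 vY.
by rewrite e_sym; apply: saturated_adj (bipartition_sym bipXY) vY0 uX.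
Qed.

Lemma zigzag_is_path g1 g0 ys0 ys1 :
  {subset g1 <= X} -> {subset g0 <= X0} -> {subset ys0 <= Y0} -> {subset ys1 <= Y} ->
  size g1 <= size ys0 -> uniq (g1 ++ g0) -> uniq (ys0 ++ ys1) -> g1 ++ g0 != [::] ->
  is_path e (zigzag (g1 ++ g0) (ys0 ++ ys1)).
Proof.
move=> g1X g0X0 ys0Y0 ys1Y le_g1_ys0 Ug Uys.
have gX : {subset g1 ++ g0 <= X}.
  by move=> v; rewrite mem_cat => /orP[/g1X | /g0X0/(subsetP (saturated_sub _ _ _))].
have ysY : {subset ys0 ++ ys1 <= Y}.
  by move=> v; rewrite mem_cat => /orP[/ys0Y0/(subsetP (saturated_sub _ _ _)) | /ys1Y].
have Uzz : uniq (zigzag (g1 ++ g0) (ys0 ++ ys1)).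
  apply: zigzag_uniq; rewrite cat_uniq Ug Uys andbT; apply/hasPn => v /ysY vY.
  by apply/negP => /gX vX; rewrite (disjointFr bipXY.1 vX) in vY.
case E: (g1 ++ g0) Uzz => [//|x xs] Uzz _; rewrite /is_path /= in Uzz *; rewrite Uzz andbT.
apply: (path_weave (x0 := x)) => i lt_i_xs lt_i_ys.
rewrite -[nth x xs i]/(nth x (x :: xs) i.+1) -E.
have lt_i : i < size (g1 ++ g0) by rewrite E ltnS ltnW.
have lt_i1 : i.+1 < size (g1 ++ g0) by rewrite E ltnS.
(* Either the i-th vertex of ys lies in Y0, or i >= size g1 and both of its
   neighbours on the path come from g0. *)
have sat j : i <= j -> j < size (g1 ++ g0) ->
    (nth x (g1 ++ g0) j \in X0) || (nth x (ys0 ++ ys1) i \in Y0).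
  move=> le_ij lt_j; case: (ltnP i (size ys0)) => [lt_i_ys0 | le_ys0_i].
    by rewrite [nth _ _ i]nth_cat lt_i_ys0 ys0Y0 ?orbT // mem_nth.
  have le_g1_j : size g1 <= j by rewrite (leq_trans le_g1_ys0) ?(leq_trans le_ys0_i).
  rewrite nth_cat ltnNge le_g1_j g0X0 // mem_nth //; rewrite size_cat in lt_j; lia.
by rewrite [e _ (nth _ _ i.+1)]e_sym !adj_saturated ?sat ?gX ?ysY ?mem_nth ?leqnSn.
Qed.

Lemma zigzag_group_is_path k g :
  g \in groups #|Y0| #|Y|.+1 k (enum X1) (enum X0) -> g != [::] ->
  is_path e (zigzag g (enum Y0 ++ enum Y1)).
Proof.
have le_cs : #|Y0| <= #|Y|.+1 by rewrite leqW // subset_leq_card ?saturated_sub.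
case/(groups_shape le_cs) => g1 [g0 [-> sub1 sub0 le_g1 _]] g_nil.
apply: zigzag_is_path => //.
- by move=> v /(mem_subseq sub1); rewrite mem_enum inE => /andP[].
- by move=> v /(mem_subseq sub0); rewrite mem_enum.
- by move=> v; rewrite mem_enum.
- by move=> v; rewrite mem_enum inE => /andP[].
- by rewrite -cardE.
- by apply: subseq_uniq (uniq_enum_catD X X0); apply: cat_subseq.
- by rewrite uniq_catC uniq_enum_catD.
Qed.

Lemma bipartite_path_cover k :
  #|X| <= k * #|Y|.+1 -> #|X1| <= k * #|Y0| ->
  #|Y|.+1 - minn #|Y0| #|X1| <= #|X0| ->
  exists P, path_cover e P /\ size P <= k.
Proof.
move=> le_X_k le_X1_k le_fill.
have le_X0_X : #|X0| <= #|X| := subset_leq_card (saturated_sub e X Y).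
have le_Y0_Y : #|Y0| <= #|Y| := subset_leq_card (saturated_sub e Y X).
have k_gt0 : 0 < k.
  by rewrite lt0n; apply: contraTneq le_fill => k0; move: le_X_k; rewrite k0; lia.
rewrite [#|X1|]cardE in le_X1_k le_fill; rewrite [#|X0|]cardE in le_fill.
have le_cs : #|Y0| <= #|Y|.+1 := leqW le_Y0_Y.
pose ys := enum Y0 ++ enum Y1.
have size_ys : size ys = #|Y| by rewrite size_cat -!cardE (card_saturatedD e Y X).
pose G := groups #|Y0| #|Y|.+1 k (enum X1) (enum X0).
exists [seq zigzag g ys | g <- G & g != [::]]; split; last first.
  by rewrite size_map size_filter (leq_trans (count_size _ _)) ?size_groups.
split=> [p | v].
  case/mapP=> g; rewrite mem_filter => /andP[g_nil gG] ->.
  exact: zigzag_group_is_path gG g_nil.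
case: (boolP (v \in X)) => [vX | vNX].
  have : v \in enum X1 ++ enum X0 by rewrite mem_cat !mem_enum in_setD vX andbT orNb.
  case/(groups_cover le_cs le_X1_k _)/flattenP => [|g gG vg].
    by rewrite size_cat -!cardE addnC -card_saturatedD.
  have [g1 [g0 [_ _ _ _ le_g]]] := groups_shape le_cs gG.
  exists (zigzag g ys); first by apply: map_f; rewrite mem_filter gG andbT; case: (g) vg.
  by apply: mem_zigzag_l vg; rewrite size_ys.
have vY : v \in Y.
  by move: (bipXY.2.1) => /setP /(_ v); rewrite !inE (negbTE vNX).
have [g gG size_g] := groups_full le_cs k_gt0 le_fill.
exists (zigzag g ys); first by apply: map_f; rewrite mem_filter gG andbT -size_eq0 size_g.
apply: mem_zigzag_r; first by rewrite size_ys size_g.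
by rewrite mem_cat !mem_enum in_setD vY andbT orbN.
Qed.

End Bipartite.

Theorem lemma2p4 (T : finType) (e : rel T) (X Y : {set T}) :
  simple_graph e ->
  bipartition e X Y ->
  0 < #|T| ->
  let X0 := [set x in X | deg e x == #|Y|] in
  let X1 := X :\: X0 in
  let Y0 := [set y in Y | deg e y == #|X|] in
  let Y1 := Y :\: Y0 in
  #|X| > #|Y| ->
  ((X1 == set0) && (Y1 == set0) \/
   (0 < #|Y1|)%N /\ (0 < #|Y0|)%N /\
   ((#|X0|%:R / #|Y1|%:R : rat) > 2 * #|X1|%:R / #|Y0|%:R)%R) ->
  exists P : seq (seq T),
    path_cover e P /\ (size P <= ceil_div #|X| (#|Y| + 1))%N.
Proof.
move=> [e_sym _] bipXY _ X0 X1 Y0 Y1 lt_Y_X hyp.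
set k := ceil_div _ _.
have le_X_k : #|X| <= k * #|Y|.+1 by rewrite -addn1 leq_ceil_div ?addn1.
have cardX := card_saturatedD e X Y; have cardY := card_saturatedD e Y X.
have hyp' : (#|X1| = 0 /\ #|Y1| = 0) \/ (0 < #|Y1| /\ 2 * #|X1| * #|Y1| < #|X0| * #|Y0|).
  case: hyp => [/andP[/eqP-> /eqP->] | [Y1_gt0 [Y0_gt0]]]; first by rewrite !cards0; left.
  by rewrite -natrM ltr_nat_div // => lt; right.
have := cover_bounds (k := k) _ _ hyp'.
rewrite -cardX -cardY => /(_ lt_Y_X le_X_k) [le_X1 le_fill].
exact (bipartite_path_cover e_sym bipXY le_X_k le_X1 le_fill).
Qed.
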